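(* Let $\mathscr C$ be a category with all small coproducts, well-powered and equipped with a factorization system $(\mathscr E,\mathscr M)$ with $\mathscr M$ consisting of monomorphisms, and let $F\colon\mathscr C\to\mathscr C$ preserve intersections. For every morphism $f\colon X\to FY$, the operator $\ominus_f\colon\mathrm{Sub}(X)\to\mathrm{Sub}(Y)$ is left adjoint to $\bigcirc_f\colon\mathrm{Sub}(Y)\to\mathrm{Sub}(X)$, i.e. $\ominus_f(m)\le m'$ iff $m\le\bigcirc_f(m')$ for all $m\in\mathrm{Sub}(X)$, $m'\in\mathrm{Sub}(Y)$. Consequently $\ominus_f$ preserves all unions (joins) and in particular is monotone.
   Context: A factorization system $(\mathscr E,\mathscr M)$: classes closed under composition with isomorphisms, every morphism factors as $m\cdot e$ with $e\in\mathscr E,m\in\mathscr M$, with unique diagonal fill-in for squares $g\cdot e=m\cdot f$. Subobjects of $X$ are represented by $\mathscr M$-morphisms into $X$; $\mathrm{Sub}(X)$ is ordered by factorization. $F$ preserves intersections: $F$ maps $\mathscr M$-morphisms to $\mathscr M$-morphisms and preserves wide pullbacks of families of $\mathscr M$-morphisms with common codomain; equivalently $F$ has least bounds: for every $f\colon X\to FY$ there is a least subobject $m\colon Z\to Y$ such that $f=Fm\cdot g$ for some $g\colon X\to FZ$ (the bound of $f$). For $f\colon X\to FY$: $\bigcirc_f(m')$, for $m'\colon S'\to Y$ in $\mathscr M$, is the pullback of $Fm'$ along $f$, as a subobject of $X$; $\ominus_f(m)$, for $m\colon S\to X$ in $\mathscr M$, is the bound of $f\cdot m$, i.e. the least subobject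 $n\colon Z\to Y$ with $f\cdot m=Fn\cdot g$ for some $g$. *)

Set Implicit Arguments.
Unset Strict Implicit.

Record Category := {
  Obj :> Type;
  Hom : Obj -> Obj -> Type;
  idm : forall A, Hom A A;
  comp : forall A B C, Hom B C -> Hom A B -> Hom A C;
  comp_assoc : forall A B C D (h : Hom C D) (g : Hom B C) (f : Hom A B),
      comp h (comp g f) = comp (comp h g) f;
  comp_id_l : forall A B (f : Hom A B), comp (idm B) f = f;
  comp_id_r : forall A B (f : Hom A B), comp f (idm A) = f
}.
Arguments Hom {c} _ _.
Arguments idm {c} _.
Arguments comp {c A B C} _ _.

Section Basics.
Variable C : Category.

Definition is_iso {A B : C} (i : Hom A B) : Prop :=
  exists j : Hom B A, comp j i = idm A /\ comp i j = idm B.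

Definition is_mono {A B : C} (m : Hom A B) : Prop :=
  forall Z (g h : Hom Z A), comp m g = comp m h -> g = h.

Definition has_small_coproducts : Prop :=
  forall (I : Type) (A : I -> C),
    exists (S : C) (inj : forall i, Hom (A i) S),
      forall (T : C) (g : forall i, Hom (A i) T),
        exists u : Hom S T,
          (forall i, comp u (inj i) = g i) /\
          (forall u' : Hom S T, (forall i, comp u' (inj i) = g i) -> u' = u).

Definition MorClass := forall A B : C, Hom A B -> Prop.

Definition is_pullback {A B D P : C} (f : Hom A D) (g : Hom B D)
    (p1 : Hom P A) (p2 : Hom P B) : Prop :=
  comp f p1 = comp g p2 /\
  forall (Q : C) (q1 : Hom Q A) (q2 : Hom Q B), comp f q1 = comp g q2 ->
    exists u : Hom Q P,
      (comp p1 u = q1 /\ comp p2 u = q2) /\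
      (forall u' : Hom Q P, comp p1 u' = q1 /\ comp p2 u' = q2 -> u' = u).

Definition is_wide_pullback {I : Type} {A : I -> C} {X P : C}
    (m : forall i, Hom (A i) X) (p : forall i, Hom P (A i)) (p0 : Hom P X)
    : Prop :=
  (forall i, comp (m i) (p i) = p0) /\
  forall (Q : C) (q : forall i, Hom Q (A i)) (q0 : Hom Q X),
    (forall i, comp (m i) (q i) = q0) ->
    exists u : Hom Q P,
      ((forall i, comp (p i) u = q i) /\ comp p0 u = q0) /\
      (forall u' : Hom Q P,
          (forall i, comp (p i) u' = q i) /\ comp p0 u' = q0 -> u' = u).

Record FactSystem := {
  Ecl : MorClass;
  Mcl : MorClass;
  E_iso : forall A B B' (e : Hom A B) (i : Hom B B') (j : Hom B' A),
      Ecl e -> (is_iso i -> Ecl (comp i e)) /\ (is_iso j -> Ecl (comp e j));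
  M_iso : forall A B B' (m : Hom A B) (i : Hom B B') (j : Hom B' A),
      Mcl m -> (is_iso i -> Mcl (comp i m)) /\ (is_iso j -> Mcl (comp m j));
  factorize : forall A B (f : Hom A B),
      exists (Z : C) (e : Hom A Z) (m : Hom Z B), Ecl e /\ Mcl m /\ f = comp m e;
  diagonal : forall A B D Z (e : Hom A B) (f : Hom A D) (m : Hom D Z)
      (g : Hom B Z), Ecl e -> Mcl m -> comp g e = comp m f ->
      exists d : Hom B D, (comp d e = f /\ comp m d = g) /\
        (forall d' : Hom B D, comp d' e = f /\ comp m d' = g -> d' = d)
}.

Variable FS : FactSystem.

Record Sub (X : C) := mkSub {
  sdom : C;
  sarr : Hom sdom X;
  sarrM : Mcl FS sarr
}.
Arguments sdom {X} _.
Arguments sarr {X} _.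

Definition sub_le {X : C} (s t : Sub X) : Prop :=
  exists h : Hom (sdom s) (sdom t), comp (sarr t) h = sarr s.

Definition well_powered : Prop :=
  forall X : C, exists (S : Type) (s : S -> Sub X),
    forall t : Sub X, exists i, sub_le t (s i) /\ sub_le (s i) t.

Definition is_join {X : C} {I : Type} (ms : I -> Sub X) (s : Sub X) : Prop :=
  (forall i, sub_le (ms i) s) /\
  (forall t : Sub X, (forall i, sub_le (ms i) t) -> sub_le s t).

Definition has_M_pullbacks : Prop :=
  forall A B D (f : Hom A D) (g : Hom B D), Mcl FS g ->
    exists (P : C) (p1 : Hom P A) (p2 : Hom P B), is_pullback f g p1 p2.

End Basics.

Arguments sdom {C FS X} _.
Arguments sarr {C FS X} _.

Record Functor (C : Category) := {
  Fobj :> C -> C;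
  Fmap : forall A B : C, Hom A B -> Hom (Fobj A) (Fobj B);
  Fmap_id : forall A, Fmap (idm A) = idm (Fobj A);
  Fmap_comp : forall A B D (g : Hom B D) (f : Hom A B),
      Fmap (comp g f) = comp (Fmap g) (Fmap f)
}.
Arguments Fmap {C} _ {A B} _.

Section Functors.
Variables (C : Category) (FS : FactSystem C) (F : Functor C).

Definition preserves_intersections : Prop :=
  (forall A B (m : Hom A B), Mcl FS m -> Mcl FS (Fmap F m)) /\
  (forall (I : Type) (A : I -> C) (X P : C) (m : forall i, Hom (A i) X)
          (p : forall i, Hom P (A i)) (p0 : Hom P X),
      (forall i, Mcl FS (m i)) ->
      is_wide_pullback m p p0 ->
      is_wide_pullback (fun i => Fmap F (m i)) (fun i => Fmap F (p i))
                       (Fmap F p0)).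

Definition is_bound {Z Y : C} (h : Hom Z (F Y)) (n : Sub FS Y) : Prop :=
  (exists g : Hom Z (F (sdom n)), h = comp (Fmap F (sarr n)) g) /\
  (forall n' : Sub FS Y,
      (exists g : Hom Z (F (sdom n')), h = comp (Fmap F (sarr n')) g) ->
      sub_le n n').

Definition is_ominus {X Y : C} (f : Hom X (F Y)) (m : Sub FS X)
    (n : Sub FS Y) : Prop :=
  is_bound (comp f (sarr m)) n.

Definition is_circ {X Y : C} (f : Hom X (F Y)) (m' : Sub FS Y)
    (c : Sub FS X) : Prop :=
  exists p2 : Hom (sdom c) (F (sdom m')),
    is_pullback f (Fmap F (sarr m')) (sarr c) p2.

End Functors.

(** Both [⊖_f(m) ≤ m'] and [m ≤ ○_f(m')] say that [f·m] factors through
    [F m']: the first because [⊖_f(m)] is the least such subobject, the second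
    by the pullback property.  Join preservation is the usual argument for left
    adjoints; it needs [○_f(m')] to exist, which we get as the image of the
    pullback leg of [F m'] along [f] (the diagonal fill-in shows that this
    image still has the universal property of the pullback in [Sub(X)]). *)


Set Implicit Arguments.
Unset Strict Implicit.

Section Ominus.
Variables (C : Category) (FS : FactSystem C) (F : Functor C).

Definition Ffactors {Z Y : C} (h : Hom Z (F Y)) (n : Sub FS Y) : Prop :=
  exists g : Hom Z (F (sdom n)), h = comp (Fmap F (sarr n)) g.

Lemma Ffactors_comp {Z Z' Y : C} (h : Hom Z (F Y)) (k : Hom Z' Z)
    (n : Sub FS Y) :
  Ffactors h n -> Ffactors (comp h k) n.
Proof.
  intros [g ->]. exists (comp g k). apply eq_sym, comp_assoc.
Qed.

Lemma Ffactors_le {Z Y : C} (h : Hom Z (F Y)) (n n' : Sub FS Y) :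
  sub_le n n' -> Ffactors h n -> Ffactors h n'.
Proof.
  intros [k Hk] [g ->]. exists (comp (Fmap F k) g).
  rewrite comp_assoc, <- Fmap_comp, Hk. reflexivity.
Qed.

Lemma bound_leP {Z Y : C} (h : Hom Z (F Y)) (n n' : Sub FS Y) :
  is_bound h n -> (sub_le n n' <-> Ffactors h n').
Proof.
  intros [Hh Hleast]. split.
  - intros Hle. exact (Ffactors_le Hle Hh).
  - exact (Hleast n').
Qed.

Lemma ominus_monotone {X Y : C} (f : Hom X (F Y)) (m1 m2 : Sub FS X)
    (n1 n2 : Sub FS Y) :
  sub_le m1 m2 -> is_ominus f m1 n1 -> is_ominus f m2 n2 -> sub_le n1 n2.
Proof.
  intros [k Hk] Hn1 [Hn2 _].
  apply (bound_leP n2 Hn1). rewrite <- Hk, comp_assoc.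
  exact (Ffactors_comp k Hn2).
Qed.

Definition is_preimage {X Y : C} (f : Hom X (F Y)) (m' : Sub FS Y)
    (c : Sub FS X) : Prop :=
  forall m : Sub FS X, sub_le m c <-> Ffactors (comp f (sarr m)) m'.

Lemma circ_preimage {X Y : C} (f : Hom X (F Y)) (m' : Sub FS Y)
    (c : Sub FS X) :
  is_circ f m' c -> is_preimage f m' c.
Proof.
  intros [p2 [Hsq Hpb]] m. split.
  - intros [k <-]. rewrite comp_assoc, Hsq. apply Ffactors_comp.
    exists p2. reflexivity.
  - intros [g Hg].
    destruct (Hpb _ (sarr m) g Hg) as [u [[Hu _] _]]. exists u. exact Hu.
Qed.

Lemma pullback_image_preimage {X Y P : C} (f : Hom X (F Y))
    (m' : Sub FS Y) (p1 : Hom P X) (p2 : Hom P (F (sdom m')))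
    (c : Sub FS X) (e : Hom P (sdom c)) :
  Mcl FS (Fmap F (sarr m')) -> is_pullback f (Fmap F (sarr m')) p1 p2 ->
  Ecl FS e -> p1 = comp (sarr c) e -> is_preimage f m' c.
Proof.
  intros HM [Hsq Hpb] He Hp1 m. split.
  - intros [k <-].
    destruct (diagonal (f := p2) (g := comp f (sarr c)) He HM)
      as [d [[_ Hd] _]].
    { rewrite <- comp_assoc, <- Hp1. exact Hsq. }
    rewrite comp_assoc, <- Hd. apply Ffactors_comp. exists d. reflexivity.
  - intros [g Hg].
    destruct (Hpb _ (sarr m) g Hg) as [u [[Hu _] _]].
    exists (comp e u). rewrite comp_assoc, <- Hp1. exact Hu.
Qed.

Lemma preimage_exists {X Y : C} (f : Hom X (F Y)) (m' : Sub FS Y) :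
  has_M_pullbacks FS ->
  (forall (A B : C) (m : Hom A B), Mcl FS m -> Mcl FS (Fmap F m)) ->
  exists c : Sub FS X, is_preimage f m' c.
Proof.
  intros HPB HFM.
  destruct (HPB _ _ _ f _ (HFM _ _ _ (sarrM m'))) as [P [p1 [p2 Hpb]]].
  destruct (factorize FS p1) as [Z [e [mm [He [Hmm Hp1]]]]].
  exists (mkSub Hmm).
  exact (pullback_image_preimage (c := mkSub Hmm) (HFM _ _ _ (sarrM m'))
           Hpb He Hp1).
Qed.

Lemma ominus_preimage_adjoint {X Y : C} (f : Hom X (F Y)) (m : Sub FS X)
    (m' n : Sub FS Y) (c : Sub FS X) :
  is_ominus f m n -> is_preimage f m' c -> (sub_le n m' <-> sub_le m c).
Proof.
  intros Hn Hc. exact (iff_trans (bound_leP m' Hn) (iff_sym (Hc m))).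
Qed.

Lemma ominus_join {X Y : C} (f : Hom X (F Y)) :
  (forall m' : Sub FS Y, exists c : Sub FS X, is_preimage f m' c) ->
  forall (I : Type) (ms : I -> Sub FS X) (mj : Sub FS X)
         (ns : I -> Sub FS Y) (nj : Sub FS Y),
    is_join ms mj -> (forall i, is_ominus f (ms i) (ns i)) ->
    is_ominus f mj nj -> is_join ns nj.
Proof.
  intros Hpre I ms mj ns nj [Hup Hleast] Hns Hnj. split.
  - intros i. exact (ominus_monotone (Hup i) (Hns i) Hnj).
  - intros t Ht. destruct (Hpre t) as [c Hc].
    apply (ominus_preimage_adjoint Hnj Hc), Hleast. intros i.
    apply (ominus_preimage_adjoint (Hns i) Hc), Ht.
Qed.

End Ominus.

Theorem proposition5p14 :
  forall (C : Category) (FS : FactSystem C),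
    has_small_coproducts C ->
    well_powered FS ->
    (forall (A B : C) (m : Hom A B), Mcl FS m -> is_mono m) ->
    has_M_pullbacks FS ->
  forall (F : Functor C),
    preserves_intersections FS F ->
  forall (X Y : C) (f : Hom X (F Y)),
    (* adjunction ominus_f -| circ_f *)
    (forall (m : Sub FS X) (m' : Sub FS Y) (n : Sub FS Y) (c : Sub FS X),
        is_ominus f m n -> is_circ f m' c ->
        (sub_le n m' <-> sub_le m c))
    /\
    (* ominus_f preserves all unions *)
    (forall (I : Type) (ms : I -> Sub FS X) (mj : Sub FS X)
            (ns : I -> Sub FS Y) (nj : Sub FS Y),
        is_join ms mj ->
        (forall i, is_ominus f (ms i) (ns i)) ->
        is_ominus f mj nj ->
        is_join ns nj)
    /\
    (* ominus_f is monotone *)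
    (forall (m1 m2 : Sub FS X) (n1 n2 : Sub FS Y),
        sub_le m1 m2 -> is_ominus f m1 n1 -> is_ominus f m2 n2 ->
        sub_le n1 n2).
Proof.
  intros C FS _ _ _ HPB F [HFM _] X Y f.
  split; [|split].
  - intros m m' n c Hn Hc.
    exact (ominus_preimage_adjoint Hn (circ_preimage Hc)).
  - apply ominus_join. intros m'. exact (preimage_exists f m' HPB HFM).
  - intros m1 m2 n1 n2. apply ominus_monotone.
Qed.
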